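(* Let $\Theta$ be a parameter space, $L(\boldsymbol{\theta}\mid D)$, $L(\boldsymbol{\theta}\mid D_0)$ likelihoods of the current and historical data, $\xi\in[0,1]$, $\alpha\in(-1,\infty)$, $z=(1+\alpha)/2$, and let $\pi_0,\tilde\pi_0$ be two baseline prior densities. Let $g^*$ (resp. $\tilde g^*$) be the generalized power posterior with baseline prior $\pi_0$ (resp. $\tilde\pi_0$): $$g^*(\boldsymbol{\theta})\propto\{(1-\xi)p_0(\boldsymbol{\theta})^z+\xi p_1(\boldsymbol{\theta})^z\}^{1/z},\quad p_0=L(\cdot\mid D)\pi_0,\ p_1=L(\cdot\mid D)L(\cdot\mid D_0)\pi_0,$$ and $\tilde g^*$ defined likewise with $\tilde\pi_0$ in place of $\pi_0$. Assume there is a measurable $\mathcal{A}\subset\Theta$ with $\pi_0(\mathcal{A})=\tilde\pi_0(\mathcal{A})=1$ and constants $0<m_L\le1\le M_L<\infty$ such that $m_L\le L(\boldsymbol{\theta}\mid D)\le M_L$ and $m_L\le L(\boldsymbol{\theta}\mid D_0)\le M_L$ for all $\boldsymbol{\theta}\in\mathcal{A}$, and constants $0<m_\pi\le1\le M_\pi$ with $m_\pi\le\pi_0(\boldsymbol{\theta})\le M_\pi$ and $m_\pi\le\tilde\pi_0(\boldsymbol{\theta})\le M_\pi$ for all $\boldsymbol{\theta}\in\Theta$. Then there exists a function $\alpha\mapsto K(\alpha)$ on $(-1,\infty)$ such that $$d_{\mathrm{TV}}(g^*,\tilde g^* )\le K(\alpha)\,d_{\mathrm{TV}}(\pi_0,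\tilde\pi_0).$$
   Context: $d_{\mathrm{TV}}(p,q)=\frac12\int_\Theta|p(\boldsymbol{\theta})-q(\boldsymbol{\theta})|d\boldsymbol{\theta}$. *)

From HB Require Import structures.
From mathcomp Require Import all_boot all_order all_algebra.
From mathcomp Require Import all_classical all_reals all_analysis.
Set Implicit Arguments. Unset Strict Implicit. Unset Printing Implicit Defensive.
Import Order.TTheory GRing.Theory Num.Theory.
Local Open Scope ring_scope.
Local Open Scope ereal_scope.

Section Defs.
Context (d : measure_display) (T : measurableType d) (R : realType).
Variable mu : {measure set T -> \bar R}.

Definition gpp_unnorm (xi z : R) (LD LD0 pi0 : T -> R) (x : T) : R :=
  ((1 - xi) * (LD x * pi0 x) `^ z + xi * (LD x * LD0 x * pi0 x) `^ z) `^ (z^-1).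

Definition normalize (f : T -> R) (x : T) : R :=
  f x / fine (\int[mu]_y (f y)%:E).

Definition gpp (xi alpha : R) (LD LD0 pi0 : T -> R) : T -> R :=
  normalize (gpp_unnorm xi ((1 + alpha) / 2) LD LD0 pi0).

Definition dTV (p q : T -> R) : \bar R :=
  (2^-1)%:E * \int[mu]_x (`|p x - q x|)%:E.

Definition is_density (p : T -> R) : Prop :=
  measurable_fun setT p /\ (forall x, (0 <= p x)%R) /\ \int[mu]_x (p x)%:E = 1.
End Defs.

(* The unnormalised power posterior is w * pi0, where, by homogeneity of the power
   mean, w is the weighted power mean of L(.|D) and L(.|D) L(.|D0); hence
   mL^2 <= w <= ML^2 on A, and A is co-null because pi0 >= mpi > 0 and pi0(A) = 1.
   For tilts w p, w q of masses c, c' one has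
   |w p / c - w q / c'| <= w |p - q| / c + |1/c - 1/c'| w q  and  |c - c'| <= int w |p - q|,
   so the total variation distance of the normalised tilts is at most
   (1/c) int w |p - q| <= (ML^2 / mL^2) int |p - q|, i.e. K = 2 ML^2 / mL^2. *)

From HB Require Import structures.
From mathcomp Require Import all_boot all_order all_algebra.
From mathcomp Require Import all_classical all_reals all_analysis.
From mathcomp Require Import ring lra measurable_realfun.
Import Order.TTheory GRing.Theory Num.Theory.
Local Open Scope ring_scope.

Section PowerMean.
Context {R : realType}.
Implicit Types xi z a b c lo hi : R.

Definition power_mean2 xi z a b : R := ((1 - xi) * a `^ z + xi * b `^ z) `^ z^-1.

Lemma powRK {z a} : 0 < z -> 0 <= a -> (a `^ z) `^ z^-1 = a.
Proof. by move=> z0 a0; rewrite -powRrM mulfV ?gt_eqF // powRr1. Qed.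

Lemma power_mean2_ge0 xi z a b : 0 <= power_mean2 xi z a b.
Proof. exact: powR_ge0. Qed.

Lemma power_mean2M xi z a b c : 0 <= xi <= 1 -> 0 < z ->
  0 <= a -> 0 <= b -> 0 <= c ->
  power_mean2 xi z (a * c) (b * c) = power_mean2 xi z a b * c.
Proof.
move=> /andP[xi0 xi1] z0 a0 b0 c0; rewrite /power_mean2 !powRM //.
have -> : (1 - xi) * (a `^ z * c `^ z) + xi * (b `^ z * c `^ z)
        = ((1 - xi) * a `^ z + xi * b `^ z) * c `^ z by ring.
by rewrite powRM ?powR_ge0 ?powRK // addr_ge0 // mulr_ge0 ?subr_ge0 ?powR_ge0.
Qed.

Lemma power_mean2_bounds xi z lo hi a b : 0 <= xi <= 1 -> 0 < z -> 0 <= lo ->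
  lo <= a <= hi -> lo <= b <= hi -> lo <= power_mean2 xi z a b <= hi.
Proof.
move=> /andP[xi0 xi1] z0 lo0 /andP[loa ahi] /andP[lob bhi].
have powR_le (u v w : R) : 0 < w -> 0 <= u -> u <= v -> u `^ w <= v `^ w.
  by move=> w0 u0 uv; apply: ge0_ler_powR; rewrite ?nnegrE ?(ltW w0) ?(le_trans u0 uv).
have lo_a := powR_le _ _ _ z0 lo0 loa; have lo_b := powR_le _ _ _ z0 lo0 lob.
have a_hi := powR_le _ _ _ z0 (le_trans lo0 loa) ahi.
have b_hi := powR_le _ _ _ z0 (le_trans lo0 lob) bhi.
have hi0 : 0 <= hi by rewrite (le_trans lo0) // (le_trans loa).
have zV0 : 0 < z^-1 by rewrite invr_gt0.
apply/andP; split.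
- by rewrite -[X in X <= _](powRK z0 lo0) powR_le ?powR_ge0 //; nra.
- by rewrite -[X in _ <= X](powRK z0 hi0) powR_le //;
    [rewrite addr_ge0 // mulr_ge0 ?subr_ge0 ?powR_ge0 | nra].
Qed.

Lemma power_mean2_mul_bounds xi z lo hi a b : 0 <= xi <= 1 -> 0 < z ->
  0 <= lo <= 1 -> 1 <= hi -> lo <= a <= hi -> lo <= b <= hi ->
  lo ^+ 2 <= power_mean2 xi z a (a * b) <= hi ^+ 2.
Proof.
move=> xi01 z0 /andP[lo0 lo1] hi1 /andP[? ?] /andP[? ?].
by apply: power_mean2_bounds; rewrite ?sqr_ge0 //; apply/andP; split; nra.
Qed.

End PowerMean.

Section NormalizedDistance.
Context {R : numFieldType}.
Implicit Types u v c d : R.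

Lemma dist_div_le u v c d : 0 < c -> 0 <= v ->
  `|u / c - v / d| <= c^-1 * `|u - v| + `|c^-1 - d^-1| * v.
Proof.
move=> c0 v0.
have -> : u / c - v / d = c^-1 * (u - v) + (c^-1 - d^-1) * v by ring.
apply: le_trans (ler_normD _ _) _.
by rewrite !normrM (ger0_norm v0) ger0_norm // invr_ge0 ltW.
Qed.

Lemma dist_inv_mul c d : 0 < c -> 0 < d -> `|c^-1 - d^-1| * d = c^-1 * `|d - c|.
Proof.
move=> c0 d0; have -> : c^-1 - d^-1 = (d - c) * (c^-1 * d^-1).
  by field; rewrite !gt_eqF.
rewrite normrM (ger0_norm (x := c^-1 * d^-1)) ?mulr_ge0 ?invr_ge0 ?ltW //.
by field; rewrite !gt_eqF.
Qed.

End NormalizedDistance.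

Local Open Scope ereal_scope.

Section TiltedDensities.
Context {d : measure_display} {T : measurableType d} {R : realType}.
Variable mu : {measure set T -> \bar R}.
Local Open Scope classical_set_scope.

Lemma measurable_power_mean2 (D : set T) (xi z : R) (f g : T -> R) :
  measurable_fun D f -> measurable_fun D g ->
  measurable_fun D (fun x => power_mean2 xi z (f x) (g x)).
Proof.
move=> mf mg; apply: (measurableT_comp (measurable_powR _)).
by apply: measurable_funD; apply: measurable_funM => //;
  apply: (measurableT_comp (measurable_powR _)).
Qed.

Lemma integral_conull {A : set T} {f : T -> \bar R} :
  measurable A -> mu (~` A) = 0 ->
  measurable_fun setT f -> (forall x, 0 <= f x) ->
  \int[mu]_x f x = \int[mu]_(x in A) f x.
Proof.
move=> mA nullA mf f0.
by rewrite (ge0_negligible_integral _ _ _ _ nullA) ?setTD ?setCK //; exact: measurableC.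
Qed.

Lemma positive_density_conull {A : set T} {p : T -> R} {m : R} :
  measurable A -> measurable_fun setT p -> (0 < m)%R -> (forall x, m <= p x)%R ->
  \int[mu]_x (p x)%:E = 1 -> \int[mu]_(x in A) (p x)%:E = 1 ->
  mu (~` A) = 0.
Proof.
move=> mA mp m0 pm ip ipA.
have p0 x : (0 <= p x)%R by rewrite (le_trans (ltW m0)).
have mAC : measurable (~` A) by exact: measurableC.
have ipAC : \int[mu]_(x in ~` A) (p x)%:E = 0.
  have : \int[mu]_(x in A) (p x)%:E + \int[mu]_(x in ~` A) (p x)%:E
         = \int[mu]_x (p x)%:E.
    rewrite -ge0_integral_setU ?setUv ?disj_set2E ?setICr //.
    - by apply/measurable_EFinP; exact: measurable_funTS.
    - by move=> x _; rewrite lee_fin.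
  by rewrite ipA ip => /(congr1 (fun y => y - 1)); rewrite addeC addeK // subee.
apply/eqP; rewrite eq_le measure_ge0 andbT -(@pmule_rle0 _ m%:E) ?lte_fin //.
rewrite -ipAC -integral_cst //; apply: ge0_le_integral => //.
- by move=> x _; rewrite lee_fin ltW.
- by apply/measurable_EFinP; exact: measurable_funTS.
- by move=> x _; rewrite lee_fin.
Qed.

Section ConullWeight.
Context {A : set T} {h f : T -> R}.
Hypotheses (mA : measurable A) (nullA : mu (~` A) = 0).
Hypotheses (mh : measurable_fun setT h) (mf : measurable_fun setT f).
Hypotheses (h0 : forall x, (0 <= h x)%R) (f0 : forall x, (0 <= f x)%R).

Let mhf : measurable_fun setT (fun x => (h x * f x)%:E).
Proof. by apply/measurable_EFinP; exact: measurable_funM. Qed.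

Let mfE (D : set T) : measurable_fun D (fun x => (f x)%:E).
Proof. by apply/measurable_EFinP; exact: measurable_funTS. Qed.

Lemma ge0_integral_weight_le {H : R} : (0 <= H)%R -> (forall x, A x -> h x <= H)%R ->
  \int[mu]_x (h x * f x)%:E <= H%:E * \int[mu]_x (f x)%:E.
Proof.
move=> H0 hH.
rewrite (integral_conull mA nullA mhf); last by move=> x; rewrite lee_fin mulr_ge0.
rewrite (integral_conull mA nullA (mfE _)); last by move=> x; rewrite lee_fin.
rewrite -ge0_integralZl_EFin //; last by move=> x _; rewrite lee_fin.
apply: ge0_le_integral => //.
- by move=> x _; rewrite lee_fin mulr_ge0.
- exact: measurable_funTS.
- exact: measurable_funeM.
- by move=> x Ax; rewrite -EFinM lee_fin ler_wpM2r ?hH.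
Qed.

Lemma ge0_integral_weight_ge {m : R} : (0 <= m)%R -> (forall x, A x -> m <= h x)%R ->
  m%:E * \int[mu]_x (f x)%:E <= \int[mu]_x (h x * f x)%:E.
Proof.
move=> m0 hm.
rewrite (integral_conull mA nullA mhf); last by move=> x; rewrite lee_fin mulr_ge0.
rewrite (integral_conull mA nullA (mfE _)); last by move=> x; rewrite lee_fin.
rewrite -ge0_integralZl_EFin //; last by move=> x _; rewrite lee_fin.
apply: ge0_le_integral => //.
- by move=> x _; rewrite lee_fin mulr_ge0.
- exact: measurable_funeM.
- exact: measurable_funTS.
- by move=> x Ax; rewrite -EFinM lee_fin ler_wpM2r ?hm.
Qed.

Lemma tilted_mass {m H : R} : (0 <= m)%R -> (m <= H)%R -> (forall x, A x -> m <= h x <= H)%R ->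
  \int[mu]_x (f x)%:E = 1 -> exists2 c : R, \int[mu]_x (h x * f x)%:E = c%:E & (m <= c)%R.
Proof.
move=> m0 mH hmH f1.
have lo := ge0_integral_weight_ge m0 (fun x Ax => proj1 (andP (hmH x Ax))).
have hi := ge0_integral_weight_le (le_trans m0 mH) (fun x Ax => proj2 (andP (hmH x Ax))).
rewrite f1 !mule1 in lo hi.
move: lo hi; case: (\int[mu]_x (h x * f x)%:E) => [c | |] //= mc _.
by exists c; rewrite // -lee_fin.
Qed.

End ConullWeight.

Definition gpp_weight (xi alpha : R) (LD LD0 : T -> R) (x : T) : R :=
  power_mean2 xi ((1 + alpha) / 2) (LD x) (LD x * LD0 x).

Lemma gppE (xi alpha : R) (LD LD0 p : T -> R) : (0 <= xi <= 1)%R -> (-1 < alpha)%R ->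
  (forall x, 0 <= LD x)%R -> (forall x, 0 <= LD0 x)%R -> (forall x, 0 <= p x)%R ->
  gpp mu xi alpha LD LD0 p =
  normalize mu (fun x => gpp_weight xi alpha LD LD0 x * p x)%R.
Proof.
move=> xi01 alpha_gt LD_ge0 LD0_ge0 p_ge0.
have z0 : (0 < (1 + alpha) / 2)%R by lra.
congr normalize; apply/funext => x.
by rewrite /gpp_unnorm /gpp_weight -power_mean2M // mulr_ge0.
Qed.

Lemma ge0_integrable {f : T -> R} {a : R} :
  measurable_fun setT f -> (forall x, 0 <= f x)%R ->
  \int[mu]_x (f x)%:E = a%:E -> mu.-integrable setT (EFin \o f).
Proof.
move=> mf f0 fa; apply/integrableP; split; first exact/measurable_EFinP.
under eq_integral do rewrite /= ger0_norm //.
by rewrite fa ltry.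
Qed.

Lemma dist_integral_le {f g : T -> R} {a b : R} :
  measurable_fun setT f -> measurable_fun setT g ->
  (forall x, 0 <= f x)%R -> (forall x, 0 <= g x)%R ->
  \int[mu]_x (f x)%:E = a%:E -> \int[mu]_x (g x)%:E = b%:E ->
  (`|a - b|)%:E <= \int[mu]_x (`|f x - g x|)%:E.
Proof.
move=> mf mg f0 g0 fa gb.
have -> : (`|a - b|)%:E = `|\int[mu]_x ((f x)%:E - (g x)%:E)|.
  rewrite integralB_EFin //; first by rewrite fa gb.
  - exact: ge0_integrable mf f0 fa.
  - exact: ge0_integrable mg g0 gb.
apply: le_abse_integral => //.
by apply: emeasurable_funB; exact/measurable_EFinP.
Qed.

Lemma tilted_mass_dist {h p q : T -> R} {c c' : R} :
  measurable_fun setT h -> measurable_fun setT p -> measurable_fun setT q ->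
  (forall x, 0 <= h x)%R -> (forall x, 0 <= p x)%R -> (forall x, 0 <= q x)%R ->
  \int[mu]_x (h x * p x)%:E = c%:E -> \int[mu]_x (h x * q x)%:E = c'%:E ->
  (`|c' - c|)%:E <= \int[mu]_x (h x * `|p x - q x|)%:E.
Proof.
move=> mh mp mq h0 p0 q0 hpc hqc.
have hp0 x : (0 <= h x * p x)%R by exact: mulr_ge0.
have hq0 x : (0 <= h x * q x)%R by exact: mulr_ge0.
apply: le_trans (dist_integral_le _ _ hq0 hp0 hqc hpc) _; try exact: measurable_funM.
by under eq_integral => x _ do rewrite -mulrBr normrM ger0_norm // distrC.
Qed.

Lemma dTV_normalize_le {h p q : T -> R} {c c' : R} :
  measurable_fun setT h -> measurable_fun setT p -> measurable_fun setT q ->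
  (forall x, 0 <= h x)%R -> (forall x, 0 <= p x)%R -> (forall x, 0 <= q x)%R ->
  \int[mu]_x (h x * p x)%:E = c%:E -> \int[mu]_x (h x * q x)%:E = c'%:E ->
  (0 < c)%R -> (0 < c')%R ->
  dTV mu (normalize mu (fun x => h x * p x)%R) (normalize mu (fun x => h x * q x)%R)
    <= c^-1%:E * \int[mu]_x (h x * `|p x - q x|)%:E.
Proof.
move=> mh mp mq h0 p0 q0 hpc hqc c0 c'0.
have cV0 : (0 <= c^-1)%R by rewrite invr_ge0 ltW.
set I := \int[mu]_x (h x * `|p x - q x|)%:E.
have mhq : measurable_fun setT (fun x => h x * q x)%R by exact: measurable_funM.
have mhd : measurable_fun setT (fun x => h x * `|p x - q x|)%R.
  by apply: measurable_funM => //; apply: measurableT_comp => //; exact: measurable_funB.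
have hdist x : (`|h x * p x - h x * q x| = h x * `|p x - q x|)%R.
  by rewrite -mulrBr normrM ger0_norm.
have mass_dist := tilted_mass_dist mh mp mq h0 p0 q0 hpc hqc.
rewrite /dTV /normalize /= hpc hqc /=.
apply: (@le_trans _ _ ((2^-1)%:E * ((c^-1)%:E * I + (c^-1)%:E * I))); last first.
  rewrite -ge0_muleDl ?lee_fin // muleA -EFinD -EFinM.
  by have -> : (2^-1 * (c^-1 + c^-1) = c^-1)%R by field; rewrite gt_eqF.
apply: lee_wpmul2l; first by rewrite lee_fin invr_ge0.
apply: (@le_trans _ _ (\int[mu]_x ((c^-1)%:E * (h x * `|p x - q x|)%:E
    + (`|c^-1 - c'^-1|)%:E * (h x * q x)%:E))).
  apply: ge0_le_integral => //.
  - apply/measurable_EFinP; apply: measurableT_comp => //.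
    by apply: measurable_funB; apply: measurable_funM => //; exact: measurable_funM.
  - by apply: emeasurable_funD; apply: measurable_funeM; exact/measurable_EFinP.
  - by move=> x _; rewrite -!EFinM -EFinD lee_fin -hdist dist_div_le ?mulr_ge0.
rewrite ge0_integralD //; last 4 first.
- by move=> x _; rewrite -EFinM lee_fin !mulr_ge0.
- by apply: measurable_funeM; exact/measurable_EFinP.
- by move=> x _; rewrite -EFinM lee_fin !mulr_ge0.
- by apply: measurable_funeM; exact/measurable_EFinP.
rewrite !ge0_integralZl_EFin //; last 4 first.
- by move=> x _; rewrite lee_fin mulr_ge0.
- exact/measurable_EFinP.
- by move=> x _; rewrite lee_fin mulr_ge0.
- exact/measurable_EFinP.
rewrite -/I hqc -EFinM dist_inv_mul // EFinM; apply: leeD2l.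
by apply: lee_wpmul2l; rewrite ?lee_fin.
Qed.

Lemma dTV_tilt_le {A : set T} {h p q : T -> R} {m H : R} :
  measurable A -> mu (~` A) = 0 -> measurable_fun setT h -> (forall x, 0 <= h x)%R ->
  (0 < m)%R -> (m <= H)%R -> (forall x, A x -> m <= h x <= H)%R ->
  is_density mu p -> is_density mu q ->
  dTV mu (normalize mu (fun x => h x * p x)%R) (normalize mu (fun x => h x * q x)%R)
    <= (2 * H / m)%:E * dTV mu p q.
Proof.
move=> mA nullA mh h0 m0 mH hmH [mp [p0 ip]] [mq [q0 iq]].
have [c hpc c_ge] := tilted_mass mA nullA mh mp h0 p0 (ltW m0) mH hmH ip.
have [c' hqc c'_ge] := tilted_mass mA nullA mh mq h0 q0 (ltW m0) mH hmH iq.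
have c0 : (0 < c)%R by exact: lt_le_trans c_ge.
apply: le_trans (dTV_normalize_le mh mp mq h0 p0 q0 hpc hqc c0 (lt_le_trans m0 c'_ge)) _.
have mdist : measurable_fun setT (fun x => `|p x - q x|)%R.
  by apply: measurableT_comp => //; exact: measurable_funB.
have h_le x : A x -> (h x <= H)%R by move/hmH/andP => [].
apply: le_trans (lee_wpmul2l _ (ge0_integral_weight_le mA nullA mh mdist h0
  (fun x => normr_ge0 _) (le_trans (ltW m0) mH) h_le)) _.
  by rewrite lee_fin invr_ge0 ltW.
rewrite /dTV !muleA -!EFinM; apply: lee_wpmul2r.
  by apply: integral_ge0 => x _; rewrite lee_fin.
have -> : (2 * H / m * 2^-1 = H * m^-1)%R by field; rewrite gt_eqF.
by rewrite lee_fin mulrC ler_wpM2l ?(le_trans (ltW m0) mH) // lef_pV2 ?posrE.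
Qed.

End TiltedDensities.

Theorem mainTheorem8 (d : measure_display) (T : measurableType d) (R : realType)
  (mu : {measure set T -> \bar R}) (mL ML mpi Mpi : R) :
  (0 < mL)%R -> (mL <= 1)%R -> (1 <= ML)%R ->
  (0 < mpi)%R -> (mpi <= 1)%R -> (1 <= Mpi)%R ->
  exists K : R -> R,
  forall (xi alpha : R) (LD LD0 pi0 tpi0 : T -> R) (A : set T),
    (0 <= xi <= 1)%R -> (-1 < alpha)%R ->
    measurable_fun setT LD -> measurable_fun setT LD0 ->
    (forall x, 0 <= LD x)%R -> (forall x, 0 <= LD0 x)%R ->
    is_density mu pi0 -> is_density mu tpi0 ->
    measurable A ->
    \int[mu]_(x in A) (pi0 x)%:E = 1 -> \int[mu]_(x in A) (tpi0 x)%:E = 1 ->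
    (forall x, A x -> mL <= LD x <= ML)%R ->
    (forall x, A x -> mL <= LD0 x <= ML)%R ->
    (forall x, mpi <= pi0 x <= Mpi)%R ->
    (forall x, mpi <= tpi0 x <= Mpi)%R ->
    dTV mu (gpp mu xi alpha LD LD0 pi0) (gpp mu xi alpha LD LD0 tpi0)
      <= (K alpha)%:E * dTV mu pi0 tpi0.
Proof.
move=> mL0 mL1 ML1 mpi0 _ _; exists (fun=> 2 * ML ^+ 2 / mL ^+ 2)%R.
move=> xi alpha LD LD0 pi0 tpi0 A xi01 alpha_gt mLD mLD0 LD_ge0 LD0_ge0
  pi_dens tpi_dens mA intA_pi _ bLD bLD0 bpi _.
have [meas_pi [pi_ge0 int_pi]] := pi_dens.
have [_ [tpi_ge0 _]] := tpi_dens.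
have z0 : (0 < (1 + alpha) / 2)%R by lra.
rewrite !gppE //; apply: (dTV_tilt_le _ mA) => //.
- by apply: (positive_density_conull mu mA meas_pi mpi0 _ int_pi intA_pi) => x;
    case/andP: (bpi x).
- by apply: measurable_power_mean2 => //; exact: measurable_funM.
- by move=> x; exact: power_mean2_ge0.
- by rewrite exprn_gt0.
- by rewrite lerXn2r ?nnegrE; lra.
- move=> x Ax; apply: power_mean2_mul_bounds => //; [lra | exact: bLD | exact: bLD0].
Qed.
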